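(* Assume the standing hypotheses described in the context. If $x,y\in\mathbb X$ and $\|x-x_0\|+\|y-x\|<R$, then \[\|F'(x_0)^{-1}E_F(y,x)\|\le e_f(\|x-x_0\|+\|y-x\|,\ \|x-x_0\|).\]
   Context: Standing hypotheses: $\mathbb X,\mathbb Y$ are Banach spaces; $B(x,r)$ is the open ball. $R\in\mathbb R$, $C\subseteq\mathbb X$, $F:C\to\mathbb Y$ is continuous and continuously differentiable on $\mathrm{int}(C)$, $x_0\in\mathrm{int}(C)$ with $F'(x_0)$ non-singular, $f:[0,R)\to\mathbb R$ is continuously differentiable, $B(x_0,R)\subseteq C$, $\|F'(x_0)^{-1}[F'(y)-F'(x)]\|\le f'(\|y-x\|+\|x-x_0\|)-f'(\|x-x_0\|)$ for all $x,y\in B(x_0,R)$ with $\|x-x_0\|+\|y-x\|<R$, $\|F'(x_0)^{-1}F(x_0)\|\le f(0)$, and (h1) $f(0)>0$, $f'(0)=-1$; (h2) $f'$ is strictly increasing and convex; (h3) $f(t)<0$ for some $t\in(0,R)$. Linearization errors: $E_F(y,x):=F(y)-[F(x)+F'(x)(y-x)]$ for $x\in B(x_0,R)$, $y\in C$; $e_f(v,t):=f(v)-[f(t)+f'(t)(v-t)]$ for $t,v\in[0,R)$. *)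

From HB Require Import structures.
From mathcomp Require Import all_boot all_order all_algebra.
From mathcomp Require Import all_classical all_reals all_analysis.
Set Implicit Arguments. Unset Strict Implicit. Unset Printing Implicit Defensive.
Import Order.TTheory GRing.Theory Num.Theory.
Import numFieldNormedType.Exports.
Local Open Scope classical_set_scope.
Local Open Scope ring_scope.

Definition lin_err_F (R : realType) (X Y : normedModType R)
  (F : X -> Y) (y x : X) : Y :=
  F y - (F x + 'd F x (y - x)).

Definition lin_err_f (R : realType) (f f' : R -> R) (v t : R) : R :=
  f v - (f t + f' t * (v - t)).

Definition is_deriv_on_0R (R : realType) (Rr : R) (f f' : R -> R) : Prop :=
  forall t, 0 <= t < Rr ->
    (fun h => (f (t + h) - f t) / h) @
      within [set h | 0 <= t + h < Rr] ((0 : R)^') --> f' t.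

(* Operator-norm continuity of x |-> F'(x) on a set S, written out pointwise:
   for every eps > 0 there is delta > 0 with ||F'(z) - F'(x)|| <= eps. *)
Definition diff_continuous_on (R : realType) (X Y : normedModType R)
  (F : X -> Y) (S : set X) : Prop :=
  forall x, S x -> forall eps : R, 0 < eps -> exists2 delta : R, 0 < delta &
    forall z, S z -> `|z - x| < delta ->
      forall v, `|'d F z v - 'd F x v| <= eps * `|v|.

From HB Require Import structures.
From mathcomp Require Import all_boot all_order all_algebra.
From mathcomp Require Import all_classical all_reals all_analysis.
From mathcomp Require Import lra ring.
Import Order.TTheory GRing.Theory Num.Theory.
Import numFieldNormedType.Exports.
Local Open Scope classical_set_scope.
Local Open Scope ring_scope.

(* Put d := y - x, a := |x - x0|, b := |d| and compare, on [0, 1],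
     g t := F'(x0)^-1 (F (x + t d) - t F'(x) d)   and   phi t := f (a + t b) - t f'(a) b.
   The increments g 1 - g 0 and phi 1 - phi 0 are the two linearization errors, and
   the majorant condition along the segment says exactly |g'(t)| <= phi'(t).  The mean
   value inequality |g 1 - g 0| <= phi 1 - phi 0, proved by real induction on [0, 1]
   with one-sided difference quotients, is the claim. *)

Lemma exists_small_pos {R : realFieldType} {d m : R} :
  0 < d -> 0 < m -> exists h, [/\ 0 < h, h < d & h <= m].
Proof.
move=> d0 m0; exists (Num.min d m / 2).
have [min_le_d min_le_m] : Num.min d m <= d /\ Num.min d m <= m.
  by rewrite !ge_min !lexx orbT.
have min_gt0 : 0 < Num.min d m by rewrite lt_min d0 m0.
by split; lra.
Qed.

Lemma real_induction {R : realType} {psi : R -> R} :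
  (forall c, 0 <= c < 1 -> exists2 d : R, 0 < d &
     forall h, 0 < h < d -> psi (c + h) <= psi c) ->
  (forall c, 0 < c <= 1 -> forall e : R, 0 < e -> exists2 d : R, 0 < d &
     forall h, 0 < h < d -> h <= c -> psi c <= psi (c - h) + e) ->
  psi 1 <= psi 0.
Proof.
move=> step_right cont_left.
pose A := [set t : R | 0 <= t <= 1 /\ forall s, 0 <= s <= t -> psi s <= psi 0].
have A0 : A 0.
  split=> [|s s0]; first by rewrite lexx ler01.
  by rewrite (_ : s = 0) //; apply/le_anti; rewrite andbC.
have supA : has_sup A by split; [exists 0 | exists 1 => t [/andP[_ ->]]].
set c := sup A.
have c0 : 0 <= c by exact: sup_upper_bound.
have c1 : c <= 1 by apply: ge_sup; [exists 0 | move=> t [/andP[_ ->]]].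
have below_c s : 0 <= s < c -> psi s <= psi 0.
  move=> /andP[s0 sc]; have [|t [_ At] st] := sup_adherent (eps := c - s) _ supA.
    by rewrite subr_gt0.
  by apply: At; rewrite s0 /=; move: st; rewrite /c; lra.
have psi_c : psi c <= psi 0.
  have [c_gt0|] := ltrP 0 c; last first.
    by move=> c_le0; have -> : c = 0 by apply/le_anti; rewrite c0 c_le0.
  apply/ler_addgt0Pr => e e0.
  have [d d0 Hd] : exists2 d : R, 0 < d &
    forall h, 0 < h < d -> h <= c -> psi c <= psi (c - h) + e.
    by apply: cont_left; rewrite ?c_gt0.
  have [h [h0 hd hc]] := exists_small_pos d0 c_gt0.
  by apply: le_trans (Hd h _ hc) _; [lra | rewrite lerD2r below_c //; lra].
have Ac : A c.
  split=> [|s /andP[s0 sc]]; first by rewrite c0.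
  have [sc'|cs] := ltrP s c; first by rewrite below_c ?s0.
  by have -> : s = c by apply/le_anti; rewrite sc cs.
have [c_lt1|] := ltrP c 1; last first.
  by move=> c_ge1; have <- : c = 1 by apply/le_anti; rewrite c1 c_ge1.
have [d d0 Hd] : exists2 d : R, 0 < d & forall h, 0 < h < d -> psi (c + h) <= psi c.
  by apply: step_right; rewrite c0.
have [h [h0 hd hc]] : exists h, [/\ 0 < h, h < d & h <= 1 - c].
  by apply: exists_small_pos; rewrite ?subr_gt0.
suff : A (c + h) by move/sup_upper_bound => /(_ supA); rewrite -/c; lra.
split=> [|s /andP[s0 sch]]; first by lra.
have [sc|cs] := lerP s c; first by apply: Ac.2; rewrite s0.
rewrite (_ : s = c + (s - c)); last by rewrite addrC subrK.
by apply: le_trans (Hd _ _) psi_c; lra.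
Qed.

Definition diff_quot {R : realType} {V : normedModType R} (g : R -> V) (c h : R) : V :=
  h^-1 *: (g (c + h) - g c).

Lemma diff_quot_cvg_approx {R : realType} {V : normedModType R} {g : R -> V}
    {c : R} {L : V} {D : set R} {e : R} :
  diff_quot g c @ within D 0^' --> L -> 0 < e -> exists2 d : R, 0 < d &
    forall h, h != 0 -> `|h| < d -> D h -> `|g (c + h) - g c - h *: L| <= `|h| * e.
Proof.
move=> /cvgrPdist_lt /(_ e) + e0 => /(_ e0).
rewrite near_withinE /= /dnbhs near_withinE => /nbhs_ballP[d /= d0 Hd].
exists d => // h h0 hd Dh.
have -> : g (c + h) - g c - h *: L = h *: (diff_quot g c h - L).
  by rewrite scalerBr /diff_quot scalerA divff // scale1r.
rewrite normrZ ler_wpM2l // distrC ltW //; apply: Hd => //.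
by rewrite /ball /= sub0r normrN.
Qed.

Section MeanValueInequality.
Variables (R : realType) (V : normedModType R).
Variables (g g' : R -> V) (phi phi' : R -> R).

Hypothesis g_deriv :
  forall c, 0 <= c <= 1 -> diff_quot g c @ within [set h | 0 <= c + h <= 1] 0^' --> g' c.
Hypothesis phi_deriv :
  forall c, 0 <= c <= 1 -> diff_quot phi c @ within [set h | 0 <= c + h <= 1] 0^' --> phi' c.
Hypothesis norm_g'_le : forall c, 0 <= c <= 1 -> `|g' c| <= phi' c.

(* The slack [e * tau] absorbs the first-order errors in the step to the right. *)
Let psi (e tau : R) := `|g tau - g 0| - (phi tau - phi 0) - e * tau.

Let psi_step_right e : 0 < e -> forall c, 0 <= c < 1 -> exists2 d : R, 0 < d &
  forall h, 0 < h < d -> psi e (c + h) <= psi e c.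
Proof.
move=> e0 c /andP[c0 c1]; have c01 : 0 <= c <= 1 by rewrite c0 ltW.
have e2 : 0 < e / 2 by rewrite divr_gt0.
have [d1 d1_gt0 Hg] := diff_quot_cvg_approx (g_deriv _ c01) e2.
have [d2 d2_gt0 Hphi] := diff_quot_cvg_approx (phi_deriv _ c01) e2.
exists (Num.min d1 (Num.min d2 (1 - c))); first by rewrite !lt_min d1_gt0 d2_gt0 subr_gt0.
move=> h /andP[h0]; rewrite !lt_min => /and3P[hd1 hd2 hc].
have h_neq0 : h != 0 by rewrite gt_eqF.
have in01h : 0 <= c + h <= 1 by apply/andP; split; lra.
have := Hg h h_neq0 _ in01h; rewrite gtr0_norm // => /(_ hd1) Gh.
have := Hphi h h_neq0 _ in01h; rewrite gtr0_norm // => /(_ hd2) Ph.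
have Gh' : `|g (c + h) - g c| <= h * `|g' c| + h * (e / 2).
  have := ler_normD (g (c + h) - g c - h *: g' c) (h *: g' c).
  by rewrite subrK normrZ gtr0_norm //; lra.
have Ph' : h * phi' c - h * (e / 2) <= phi (c + h) - phi c.
  by move: Ph; rewrite -[h *: phi' c]/(h * phi' c) ler_norml; lra.
have hg'phi' : h * `|g' c| <= h * phi' c.
  by apply: ler_wpM2l; [exact: ltW | exact: norm_g'_le].
have := ler_distD (g c) (g (c + h)) (g 0).
by rewrite /psi; lra.
Qed.

Let psi_cont_left e : 0 < e -> forall c, 0 < c <= 1 ->
  forall e' : R, 0 < e' -> exists2 d : R, 0 < d &
    forall h, 0 < h < d -> h <= c -> psi e c <= psi e (c - h) + e'.
Proof.
move=> e0 c /andP[c0 c1] e' e'0; have c01 : 0 <= c <= 1 by rewrite ltW.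
have [d1 d1_gt0 Hg] := diff_quot_cvg_approx (g_deriv _ c01) ltr01.
have [d2 d2_gt0 Hphi] := diff_quot_cvg_approx (phi_deriv _ c01) ltr01.
pose M := `|g' c| + `|phi' c| + 2.
have M_gt0 : 0 < M by rewrite /M; have := normr_ge0 (g' c); have := normr_ge0 (phi' c); lra.
exists (Num.min d1 (Num.min d2 (e' / M))); first by rewrite !lt_min d1_gt0 d2_gt0 divr_gt0.
move=> h /andP[h0]; rewrite !lt_min => /and3P[hd1 hd2 hM] hc.
have h_neq0 : - h != 0 by rewrite oppr_eq0 gt_eqF.
have in01h : 0 <= c + - h <= 1 by apply/andP; split; lra.
have := Hg _ h_neq0 _ in01h; rewrite normrN gtr0_norm // => /(_ hd1) Gh.
have := Hphi _ h_neq0 _ in01h; rewrite normrN gtr0_norm // => /(_ hd2) Ph.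
have Gh' : `|g (c - h) - g c| <= h * `|g' c| + h.
  have := ler_normD (g (c - h) - g c - - h *: g' c) (- h *: g' c).
  by rewrite subrK normrZ normrN gtr0_norm //; lra.
have Ph' : `|phi (c - h) - phi c| <= h * `|phi' c| + h.
  move: Ph; rewrite -[- h *: phi' c]/(- h * phi' c).
  have := ler_normD (phi (c - h) - phi c - - h * phi' c) (- h * phi' c).
  by rewrite subrK normrM normrN (gtr0_norm h0); lra.
have hMe' : h * M < e' by rewrite -ltr_pdivlMr.
have := ler_distD (g (c - h)) (g c) (g 0); rewrite (distrC (g c) (g (c - h))).
have := ler_norm (phi (c - h) - phi c); have : 0 <= e * h by rewrite mulr_ge0 ?ltW.
by rewrite /psi; rewrite /M in hMe'; lra.
Qed.

Lemma mean_value_inequality : `|g 1 - g 0| <= phi 1 - phi 0.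
Proof.
apply/ler_addgt0Pr => e e0.
have := real_induction (@psi_step_right e e0) (@psi_cont_left e e0).
by rewrite /psi subrr normr0 subrr mulr0 mulr1; lra.
Qed.

End MeanValueInequality.

Lemma diff_quot_line {R : realType} {X Y : normedModType R} (F : X -> Y) (x d : X) (c : R) :
  differentiable F (x + c *: d) ->
  diff_quot (fun tau => F (x + tau *: d)) c @ 0^' --> 'd F (x + c *: d) d.
Proof.
move=> dF; rewrite -deriveE //.
have -> : diff_quot (fun tau => F (x + tau *: d)) c =
          fun h => h^-1 *: (F (h *: d + (x + c *: d)) - F (x + c *: d)).
  apply/funext => h; rewrite /diff_quot.
  by have -> : x + (c + h) *: d = h *: d + (x + c *: d) by rewrite scalerDl addrA addrC.
exact: diff_derivable.
Qed.

Lemma diff_quot_linear {R : realType} {X Y : normedModType R} (A : {linear Y -> X})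
    (G : R -> Y) (c : R) (D : set R) (L : Y) : continuous A ->
  diff_quot G c @ within D 0^' --> L -> diff_quot (A \o G) c @ within D 0^' --> A L.
Proof.
move=> A_cont GL; have -> : diff_quot (A \o G) c = A \o diff_quot G c.
  by apply/funext => h; rewrite /diff_quot /= linearZ /= [A (_ - _)]linearB.
exact: cvg_comp GL (A_cont L).
Qed.

Lemma diff_quot_subZ {R : realType} {V : normedModType R} (G : R -> V) (w : V)
    (c : R) (D : set R) (L : V) :
  diff_quot G c @ within D 0^' --> L ->
  diff_quot (fun tau => G tau - tau *: w) c @ within D 0^' --> L - w.
Proof.
move=> GL; apply: cvg_trans (cvgB GL (cvg_cst w)); apply: near_eq_cvg.
near=> h; have h_neq0 : h != 0.
  by near: h; apply: cvg_within; exact: (@nbhs_dnbhs_neq R 0).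
rewrite /diff_quot /= scalerDl opprD opprB !addrA.
by rewrite [G (c + h) - _ - _]addrAC subrK addrAC scalerBr scalerA mulVf // scale1r.
Unshelve. all: by end_near.
Qed.

Lemma cvg_mulr_within_dnbhs0 {R : realType} {b : R} {D E : set R} :
  0 < b -> (forall h, D h -> E (h * b)) ->
  (fun h => h * b) @ within D 0^' --> within E 0^'.
Proof.
move=> b0 DE A /= EA; have : within E 0^' A by exact: EA.
rewrite /within /dnbhs /within /= => /nbhs_ballP[r r0 Hr].
suff : within D 0^' (fun h => A (h * b)) by [].
rewrite /within /dnbhs /within /=; apply/nbhs_ballP.
exists (r / b) => [|h hr h0 Dh]; first by rewrite /= divr_gt0.
apply: Hr; [| by rewrite mulf_neq0 // gt_eqF | exact: DE].
move: hr; rewrite -!ball_normE /ball_ /= !sub0r !normrN normrM (gtr0_norm b0).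
by rewrite ltr_pdivlMr.
Qed.

Lemma diff_quot_affine {R : realType} (f : R -> R) (a b c L : R) (D E : set R) :
  0 < b -> (forall h, D h -> E (h * b)) ->
  diff_quot f (a + c * b) @ within E 0^' --> L ->
  diff_quot (fun tau => f (a + tau * b)) c @ within D 0^' --> b * L.
Proof.
move=> b0 DE fL; have scale_cvg := cvg_mulr_within_dnbhs0 b0 DE.
have -> : diff_quot (fun tau => f (a + tau * b)) c =
          (fun=> b) \* (diff_quot f (a + c * b) \o ( *%R^~ b)).
  apply/funext => h; rewrite /diff_quot /= mulrDl addrA -![_ *: _]/(_ * _).
  have [->|h0] := eqVneq h 0; first by rewrite mul0r invr0 !mul0r mulr0.
  by field; rewrite h0 gt_eqF.
exact: cvgM (cvg_cst b) (cvg_comp _ _ scale_cvg fL).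
Qed.

Section LinearizationError.
Context {R : realType} {X Y : completeNormedModType R}.
Context {Rr : R} {C : set X} {F : X -> Y} {x0 : X} {Finv : {linear Y -> X}}.
Context {f f' : R -> R}.
Hypothesis F_diff : forall x, interior C x -> differentiable F x.
Hypothesis Finv_cont : continuous Finv.
Hypothesis f_deriv : is_deriv_on_0R Rr f f'.
Hypothesis ball_sub : ball x0 Rr `<=` C.
Hypothesis majorant : forall x y, ball x0 Rr x -> ball x0 Rr y ->
  `|x - x0| + `|y - x| < Rr ->
  forall v : X, `|Finv ('d F y v - 'd F x v)|
    <= (f' (`|y - x| + `|x - x0|) - f' `|x - x0|) * `|v|.

Let ball_sub_interior : ball x0 Rr `<=` interior C.
Proof. by rewrite -(open_subsetE _ (@ball_open _ _ x0 Rr)). Qed.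

Context {x y : X}.
Hypothesis xy_in : `|x - x0| + `|y - x| < Rr.
Hypothesis y_neq_x : y != x.

Let a := `|x - x0|.
Let b := `|y - x|.
Let d := y - x.
Let a_ge0 : 0 <= a. Proof. exact: normr_ge0. Qed.
Let b_gt0 : 0 < b. Proof. by rewrite normr_gt0 subr_eq0. Qed.
Let ab_lt : a + b < Rr. Proof. exact: xy_in. Qed.

Let segment_in_ball c : 0 <= c <= 1 -> ball x0 Rr (x + c *: d).
Proof.
move=> /andP[c0 c1]; rewrite -ball_normE /ball_ /= opprD addrA.
apply: le_lt_trans (ler_normB _ _) _; rewrite normrZ (ger0_norm c0) distrC.
by apply: le_lt_trans xy_in; rewrite lerD2l -[X in _ <= X]mul1r ler_wpM2r.
Qed.

Let dist_segment c : 0 <= c -> `|x + c *: d - x| = c * b.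
Proof. by move=> c0; rewrite addrC addKr normrZ ger0_norm. Qed.

Let g tau := Finv (F (x + tau *: d)) - tau *: Finv ('d F x d).
Let phi tau := f (a + tau * b) - tau * (f' a * b).

Let g_deriv c : 0 <= c <= 1 ->
  diff_quot g c @ within [set h | 0 <= c + h <= 1] 0^'
    --> Finv ('d F (x + c *: d) d) - Finv ('d F x d).
Proof.
move=> c01; apply: diff_quot_subZ; apply: diff_quot_linear => //.
apply: cvg_within_filter; apply: diff_quot_line; apply: F_diff.
exact/ball_sub_interior/segment_in_ball.
Qed.

Let f_arg_in_dom s : 0 <= s <= 1 -> 0 <= a + s * b < Rr.
Proof.
case/andP=> s0 s1; have sb_ge0 : 0 <= s * b by rewrite mulr_ge0 // ltW.
have sb_le : s * b <= b by rewrite -[X in _ <= X]mul1r ler_wpM2r // ltW.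
by have a0 := a_ge0; have ab := ab_lt; apply/andP; split; lra.
Qed.

Let phi_deriv c : 0 <= c <= 1 ->
  diff_quot phi c @ within [set h | 0 <= c + h <= 1] 0^'
    --> b * f' (a + c * b) - f' a * b.
Proof.
move=> c01; apply: diff_quot_subZ.
apply: (@diff_quot_affine _ _ _ _ _ _ _ [set h | 0 <= a + c * b + h < Rr]) => // [h|].
  by move=> /f_arg_in_dom; rewrite /mkset mulrDl addrA.
suff -> : diff_quot f (a + c * b) = fun h => (f (a + c * b + h) - f (a + c * b)) / h.
  exact: f_deriv _ (f_arg_in_dom _ c01).
by apply/funext => h; rewrite /diff_quot -[_ *: _]/(_ * _) mulrC.
Qed.

Let x_in_ball : ball x0 Rr x.
Proof. by rewrite -ball_normE /ball_ /= distrC -/a; have := b_gt0; have := ab_lt; lra. Qed.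

Let g'_bound c : 0 <= c <= 1 ->
  `|Finv ('d F (x + c *: d) d) - Finv ('d F x d)| <= b * f' (a + c * b) - f' a * b.
Proof.
move=> c01; have /andP[c0 _] := c01; have /andP[_ acb_lt] := f_arg_in_dom _ c01.
have xz_in : `|x - x0| + `|x + c *: d - x| < Rr by rewrite dist_segment.
rewrite -linearB; apply: le_trans (majorant _ _ x_in_ball (segment_in_ball _ c01) xz_in d) _.
by rewrite dist_segment // -/a -/b [c * b + a]addrC; lra.
Qed.

Lemma lin_err_F_le :
  `|Finv (lin_err_F F y x)| <= lin_err_f f f' (`|x - x0| + `|y - x|) `|x - x0|.
Proof.
have -> : Finv (lin_err_F F y x) = g 1 - g 0.
  rewrite /g /lin_err_F !(scale1r, scale0r, addr0, subr0) subrKC.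
  by move: ('d F x d) => D0; rewrite !linearB linearD /= opprD addrA addrAC.
have -> : lin_err_f f f' (`|x - x0| + `|y - x|) `|x - x0| = phi 1 - phi 0.
  by rewrite /phi /lin_err_f !(mul1r, mul0r, addr0, subr0) -/a -/b; lra.
apply: mean_value_inequality; [exact: g_deriv | exact: phi_deriv | exact: g'_bound].
Qed.

End LinearizationError.

Theorem lemma3p2 (R : realType) (X Y : completeNormedModType R)
  (Rr : R) (C : set X) (F : X -> Y) (x0 : X)
  (Finv : {linear Y -> X}) (f f' : R -> R)
  (* F continuous on C, continuously differentiable on int(C) *)
  (hFcont : {within C, continuous F})
  (hFdiff : forall x, interior C x -> differentiable F x)
  (hFC1 : diff_continuous_on F (interior C))
  (* x0 in int(C), F'(x0) non-singular with (bounded) inverse Finv *)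
  (hx0 : interior C x0)
  (hFinv_cont : continuous Finv)
  (hFinv_l : forall v : X, Finv ('d F x0 v) = v)
  (hFinv_r : forall w : Y, 'd F x0 (Finv w) = w)
  (* f : [0,Rr) -> R continuously differentiable, with derivative f' *)
  (hf : is_deriv_on_0R Rr f f')
  (hf'cont : {within `[0, Rr[, continuous f'})
  (hball : ball x0 Rr `<=` C)
  (* majorant condition (operator-norm bound written pointwise) *)
  (hmaj : forall x y, ball x0 Rr x -> ball x0 Rr y ->
     `|x - x0| + `|y - x| < Rr ->
     forall v : X, `|Finv ('d F y v - 'd F x v)|
        <= (f' (`|y - x| + `|x - x0|) - f' `|x - x0|) * `|v|)
  (hF0 : `|Finv (F x0)| <= f 0)
  (* (h1) *)
  (h1a : 0 < f 0) (h1b : f' 0 = -1)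
  (* (h2) f' strictly increasing and convex on [0,Rr) *)
  (h2inc : forall s t, 0 <= s -> s < t -> t < Rr -> f' s < f' t)
  (h2cvx : forall s t l, 0 <= s < Rr -> 0 <= t < Rr -> 0 <= l <= 1 ->
     f' (l * s + (1 - l) * t) <= l * f' s + (1 - l) * f' t)
  (* (h3) *)
  (h3 : exists2 t, 0 < t < Rr & f t < 0) :
  forall x y : X, `|x - x0| + `|y - x| < Rr ->
    `|Finv (lin_err_F F y x)|
      <= lin_err_f f f' (`|x - x0| + `|y - x|) `|x - x0|.
Proof.
move=> x y xy_in; have [->|y_neq_x] := eqVneq y x.
  rewrite /lin_err_F /lin_err_f !subrr linear0 !addr0 subrr linear0 normr0.
  by rewrite addr0 subrr mulr0 addr0 subrr.
exact: (lin_err_F_le hFdiff hFinv_cont hf hball hmaj xy_in y_neq_x).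
Qed.
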